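(* Let $\mathbf L=(L,\le,\wedge,\vee,0,1,\nu)$ be a bounded lattice with a minimal quasi-complementation operator and let $(X,\parallel,Y,S_\vee)$ be its canonical frame. Then $(X_a)^*=X_{\nu a}$ for every $a\in L$, and the map $a\mapsto X_a$ is an isomorphism of quasi-complemented lattices from $\mathbf L$ onto $(\mathtt{KO}\mathcal G(\mathfrak X),\subseteq,\cap,\vee,\emptyset,X,(\cdot)^* )$.
   Context: A minimal quasi-complementation operator on a bounded lattice is an antitone operation $\nu$ with $\nu 0=1$ and $\nu(a\vee b)=\nu a\wedge\nu b$. Canonical frame: $X$ the proper filters of $\mathbf L$, $Y$ the proper ideals, $x\parallel y$ iff $x\cap y\neq\emptyset$; $\widehat\nu(x)$ is the ideal generated by $\{\nu a:a\in x\}$; $yS_\vee x$ iff $\widehat\nu(x)\subseteq y$ (equivalently, $a\in x$ implies $\nu a\in y$ for all $a$). $X_a=\{x\in X:a\in x\}$; $\mathfrak X$ is $X$ with the topology generated by $\{X_a\}$. For $U\subseteq X$, $U'=\{y:\forall x\in U\;x\parallel y\}$; for $V\subseteq Y$, $V'=\{x:\forall y\in V\;x\parallel y\}$; $\mathtt{KO}\mathcal G(\mathfrak X)$ is the set of compact-open subsets $A$ of $\mathfrak X$ with $A=A''$, with join $A\vee C=(A\cup C)''$. Incompatibility: $x\perp z$ iff $\forall y(yS_\vee z\Rightarrow x\parallel y)$ (equivalently, some $e\in z$ has $\nu e\in x$); $A^*=\{x:\forall z\in A\;x\perp z\}$. *)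

From Stdlib Require List.
From mathcomp Require Import all_boot all_order.
Import Order.Theory.
Set Implicit Arguments. Unset Strict Implicit. Unset Printing Implicit Defensive.
Local Open Scope order_scope.

Section Frame.
Context {disp : Order.disp_t} {L : tbLatticeType disp}.

Definition is_mqc (nu : L -> L) : Prop :=
  (forall a b, a <= b -> nu b <= nu a) /\ nu \bot = \top /\
  (forall a b, nu (a `|` b) = nu a `&` nu b).

Definition is_filter (x : L -> Prop) : Prop :=
  (exists a, x a) /\ (forall a b, x a -> a <= b -> x b) /\
  (forall a b, x a -> x b -> x (a `&` b)).
Definition proper_filter (x : L -> Prop) : Prop := is_filter x /\ ~ x \bot.

Definition is_ideal (y : L -> Prop) : Prop :=
  (exists a, y a) /\ (forall a b, y b -> a <= b -> y a) /\
  (forall a b, y a -> y b -> y (a `|` b)).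
Definition proper_ideal (y : L -> Prop) : Prop := is_ideal y /\ ~ y \top.

(** X = proper filters, Y = proper ideals. *)
Definition filt := {x : L -> Prop | proper_filter x}.
Definition idl := {y : L -> Prop | proper_ideal y}.

Definition compat (x : filt) (y : idl) : Prop :=
  exists a, proj1_sig x a /\ proj1_sig y a.

Definition Xa (a : L) : filt -> Prop := fun x => proj1_sig x a.

Definition ideal_gen (S : L -> Prop) : L -> Prop :=
  fun b => forall y, is_ideal y -> (forall a, S a -> y a) -> y b.

Definition nu_hat (nu : L -> L) (x : filt) : L -> Prop :=
  ideal_gen (fun c => exists a, proj1_sig x a /\ c = nu a).

Definition Svee (nu : L -> L) (y : idl) (x : filt) : Prop :=
  forall b, nu_hat nu x b -> proj1_sig y b.

Definition perp (nu : L -> L) (x z : filt) : Prop :=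
  forall y, Svee nu y z -> compat x y.

Definition star (nu : L -> L) (A : filt -> Prop) : filt -> Prop :=
  fun x => forall z, A z -> perp nu x z.

Definition primeU (U : filt -> Prop) : idl -> Prop :=
  fun y => forall x, U x -> compat x y.
Definition primeV (V : idl -> Prop) : filt -> Prop :=
  fun x => forall y, V y -> compat x y.

Definition galois_closed (A : filt -> Prop) : Prop := A = primeV (primeU A).

Definition joinG (A C : filt -> Prop) : filt -> Prop :=
  primeV (primeU (fun x => A x \/ C x)).

(** Open sets of the topology on X generated by the subbasis {X_a : a in L}:
    unions of finite intersections of subbasic sets. *)
Definition opn (U : filt -> Prop) : Prop :=
  forall x, U x -> exists s : seq L,
    (forall a, a \in s -> Xa a x) /\
    (forall z, (forall a, a \in s -> Xa a z) -> U z).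

Definition compact (A : filt -> Prop) : Prop :=
  forall (I : Type) (U : I -> filt -> Prop),
    (forall i, opn (U i)) -> (forall x, A x -> exists i, U i x) ->
    exists s : list I, forall x, A x -> exists i, Stdlib.Lists.List.In i s /\ U i x.

Definition KOG (A : filt -> Prop) : Prop := opn A /\ compact A /\ galois_closed A.

End Frame.

From mathcomp Require Import all_boot all_order.
From Stdlib Require Import FunctionalExtensionality PropExtensionality Classical.
Import Order.Theory.
Local Open Scope order_scope.
Set Implicit Arguments. Unset Strict Implicit.

(* Principal filters and ideals separate the canonical frame: for a proper
   filter x, [c \in x] iff x meets every proper ideal containing c (test with
   the principal ideal of c), and a proper ideal y meets every filter of X_c
   iff [c \in y] (test with the principal filter of c).  Hence the Galois
   closure of X_a1 u ... u X_an is X_(a1 `|` ... `|` an).  Since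
   X_a n X_b = X_(a `&` b), the sets X_a form a basis, so a compact-open set is
   a finite union of them and, if Galois-closed, is itself some X_c.  Finally
   x is incompatible with every filter containing a iff it is incompatible with
   the principal filter of a, whose image under nu-hat is the principal ideal
   of nu a; this gives (X_a)^* = X_(nu a). *)

Lemma predext (T : Type) (P Q : T -> Prop) : (forall x, P x <-> Q x) -> P = Q.
Proof.
by move=> PQ; apply: functional_extensionality => x; apply: propositional_extensionality.
Qed.

Section CanonicalFrame.
Context {disp : Order.disp_t} {L : tbLatticeType disp}.
Local Notation F := (@filt disp L).
Local Notation I := (@idl disp L).

Lemma filt_up (x : F) (a b : L) : proj1_sig x a -> a <= b -> proj1_sig x b.
Proof. by case: x => x [[? [up ?]] ?]; apply: up. Qed.

Lemma filt_meet (x : F) (a b : L) :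
  proj1_sig x a -> proj1_sig x b -> proj1_sig x (a `&` b).
Proof. by case: x => x [[? [? closedI]] ?]; apply: closedI. Qed.

Lemma filt_top (x : F) : proj1_sig x \top.
Proof. by case: x => x [[[a xa] [up ?]] ?]; apply: up xa (lex1 a). Qed.

Lemma filt_nbot (x : F) : ~ proj1_sig x \bot.
Proof. by case: x => x []. Qed.

Lemma filt_meets (x : F) (s : seq L) :
  (forall a, a \in s -> proj1_sig x a) -> proj1_sig x (\meet_(a <- s) a).
Proof.
move=> xs; rewrite big_seq; apply: big_ind => //; [exact: filt_top | exact: filt_meet].
Qed.

Lemma idl_down (y : I) (a b : L) : proj1_sig y b -> a <= b -> proj1_sig y a.
Proof. by case: y => y [[? [down ?]] ?]; apply: down. Qed.

Lemma idl_join (y : I) (a b : L) :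
  proj1_sig y a -> proj1_sig y b -> proj1_sig y (a `|` b).
Proof. by case: y => y [[? [? closedU]] ?]; apply: closedU. Qed.

Lemma idl_bot (y : I) : proj1_sig y \bot.
Proof. by case: y => y [[[a ya] [down ?]] ?]; apply: down ya (le0x a). Qed.

(* The index type of the joins below need not have decidable equality, so
   membership is [List.In] rather than [\in]. *)
Lemma join_sup_In (T : Type) (f : T -> L) (s : seq T) (i : T) :
  List.In i s -> f i <= \join_(j <- s) f j.
Proof.
elim: s => [//|j s IHs] /= [<-|in_s]; rewrite big_cons; first exact: leUl.
exact: le_trans (IHs in_s) (leUr _ _).
Qed.

Lemma idl_joins (T : Type) (f : T -> L) (s : seq T) (y : I) :
  (forall i, List.In i s -> proj1_sig y (f i)) -> proj1_sig y (\join_(i <- s) f i).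
Proof.
elim: s => [_|j s IHs ys]; first by rewrite big_nil; exact: idl_bot.
rewrite big_cons; apply: idl_join; first by apply: ys; left.
by apply: IHs => i ?; apply: ys; right.
Qed.

Lemma proper_filter_up (a : L) : a <> \bot -> proper_filter (fun b => a <= b).
Proof.
move=> a_n0; split; last by move=> a0; apply: a_n0; apply/eqP; rewrite -lex0.
split; first by exists a.
split; first by move=> b c; apply: le_trans.
by move=> b c ab ac; rewrite lexI ab ac.
Qed.
Definition pfilt (a : L) (a_n0 : a <> \bot) : F := exist _ _ (proper_filter_up a_n0).

Lemma proper_ideal_down (c : L) : c <> \top -> proper_ideal (fun b => b <= c).
Proof.
move=> c_n1; split; last by move=> c1; apply: c_n1; apply/eqP; rewrite -le1x.
split; first by exists c.
split; first by move=> b d dc bd; apply: le_trans bd dc.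
by move=> b d bc dc; rewrite leUx bc dc.
Qed.
Definition pidl (c : L) (c_n1 : c <> \top) : I := exist _ _ (proper_ideal_down c_n1).

Lemma primeU_XaE (y : I) (c : L) : primeU (Xa c) y <-> proj1_sig y c.
Proof.
split=> [|yc x xc]; last by exists c.
have [->|c_n0] := classic (c = \bot); first by move=> _; exact: idl_bot.
by case/(_ (pfilt c_n0) (lexx c)) => e [/= ce ye]; apply: idl_down ye ce.
Qed.

Lemma filt_mem_compat (x : F) (c : L) :
  (forall y : I, proj1_sig y c -> compat x y) -> proj1_sig x c.
Proof.
have [->|c_n1] := classic (c = \top); first by move=> _; exact: filt_top.
by case/(_ (pidl c_n1) (lexx c)) => e [xe /= ec]; apply: filt_up xe ec.
Qed.

Lemma closure_eq_Xa (P : F -> Prop) (c : L) :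
  (forall z, P z -> Xa c z) -> (forall y, primeU P y -> proj1_sig y c) ->
  Xa c = primeV (primeU P).
Proof.
move=> PXc Pc; apply: predext => x; split=> [xc y Py|x_cl].
  by exists c; split=> //; apply: Pc.
apply: filt_mem_compat => y yc; apply: x_cl => z Pz.
by exists c; split=> //; apply: PXc.
Qed.

Lemma galois_closed_Xa (a : L) : galois_closed (Xa a).
Proof. by apply: closure_eq_Xa => // y /primeU_XaE. Qed.

Lemma le_Xa (a b : L) : a <= b <-> (forall x, Xa a x -> Xa b x).
Proof.
split=> [ab x xa|sub]; first exact: filt_up xa ab.
have [->|a_n0] := classic (a = \bot); first exact: le0x.
exact: (sub (pfilt a_n0) (lexx a)).
Qed.

Lemma Xa_inj (a b : L) : Xa a = Xa b -> a = b.
Proof.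
move=> eq_ab; apply/eqP; rewrite eq_le.
by apply/andP; split; apply/le_Xa => x; rewrite eq_ab.
Qed.

Lemma XaI (a b : L) : Xa (a `&` b) = (fun x => Xa a x /\ Xa b x).
Proof.
apply: predext => x; split=> [xab|[]]; last exact: filt_meet.
by split; apply: filt_up xab _; [exact: leIl | exact: leIr].
Qed.

Lemma XaU (a b : L) : Xa (a `|` b) = joinG (Xa a) (Xa b).
Proof.
rewrite /joinG; apply: closure_eq_Xa => [z [za|zb]|y yab].
- exact: (filt_up za (leUl a b)).
- exact: (filt_up zb (leUr b a)).
by apply: idl_join; apply/primeU_XaE => z ?; apply: yab; [left | right].
Qed.

Lemma Xa0 : Xa (\bot : L) = (fun _ => False).
Proof. by apply: predext => x; split=> // /filt_nbot. Qed.

Lemma Xa1 : Xa (\top : L) = (fun _ => True).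
Proof. by apply: predext => x; split=> // _; exact: filt_top. Qed.

Lemma opn_Xa (a : L) : opn (Xa a).
Proof.
move=> x xa; exists [:: a]; split; first by move=> b /[!inE] /eqP ->.
by move=> z; apply; exact: mem_head.
Qed.

Lemma compact_Xa (a : L) : compact (Xa a).
Proof.
move=> T U U_open cover.
have [a0|a_n0] := classic (a = \bot).
  by exists nil => x; rewrite a0 Xa0.
have [i Ui] := cover (pfilt a_n0) (lexx a).
have [s [s_a s_sub]] := U_open i _ Ui.
exists [:: i] => x xa; exists i; split; first by left.
by apply: s_sub => b /s_a; apply: filt_up xa.
Qed.

Lemma KOG_Xa (a : L) : KOG (Xa a).
Proof.
by split; [|split]; [exact: opn_Xa | exact: compact_Xa | exact: galois_closed_Xa].
Qed.

Lemma opn_basis (A : F -> Prop) (x : F) :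
  opn A -> A x -> exists2 b, Xa b x & forall z, Xa b z -> A z.
Proof.
move=> A_open Ax; have [s [s_x s_A]] := A_open x Ax.
exists (\meet_(a <- s) a); first exact: filt_meets.
by move=> z zs; apply: s_A => a a_s; apply: filt_up zs (meets_inf_seq _ a_s _).
Qed.

Lemma KOG_Xa_surj (A : F -> Prop) : KOG A -> exists a : L, A = Xa a.
Proof.
case=> A_open [A_compact A_closed].
pose T := {b : L | forall z, Xa b z -> A z}.
have cover x : A x -> exists i : T, Xa (proj1_sig i) x.
  by case/(opn_basis A_open) => b xb bA; exists (exist _ b bA).
have [s s_cover] := A_compact T _ (fun i => @opn_Xa (proj1_sig i)) cover.
exists (\join_(i <- s) proj1_sig i); rewrite {1}A_closed; symmetry.
apply: closure_eq_Xa => [z /s_cover [i [i_s zi]]|y yA].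
  exact: filt_up zi (join_sup_In _ i_s).
by apply: idl_joins => -[b bA] _; apply/primeU_XaE => z /bA; apply: yA.
Qed.

Section Complement.
Variable nu : L -> L.
Hypothesis nu_anti : forall a b, a <= b -> nu b <= nu a.
Hypothesis nu0 : nu \bot = \top.

Lemma star_Xa (a : L) : star nu (Xa a) = Xa (nu a).
Proof.
apply: predext => x; split=> [x_perp|xna z za y yz]; last first.
  by exists (nu a); split=> //; apply: yz => y' _; apply; exists a.
have [a0|a_n0] := classic (a = \bot); first by rewrite /Xa a0 nu0; exact: filt_top.
have [na1|na_n1] := classic (nu a = \top); first by rewrite /Xa na1; exact: filt_top.
have nu_hat_a : Svee nu (pidl na_n1) (pfilt a_n0).
  move=> b; apply; first exact: (proper_ideal_down na_n1).1.
  by move=> _ [e [/= ae ->]]; apply: nu_anti.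
have [e [xe /= ena]] := x_perp (pfilt a_n0) (lexx a) _ nu_hat_a.
exact: filt_up xe ena.
Qed.

End Complement.
End CanonicalFrame.
Unset Implicit Arguments.

Theorem lemma5p2 (disp : Order.disp_t) (L : tbLatticeType disp) (nu : L -> L)
  (hnu : is_mqc nu) :
  (* (X_a)^* = X_{nu a} *)
  (forall a : L, star nu (Xa a) = Xa (nu a)) /\
  (* a |-> X_a maps L into KOG(X) ... *)
  (forall a : L, KOG (Xa a)) /\
  (* ... onto KOG(X) ... *)
  (forall A : filt -> Prop, KOG A -> exists a : L, A = Xa a) /\
  (* ... injectively, as an order embedding ... *)
  (forall a b : L, Xa a = Xa b -> a = b) /\
  (forall a b : L, a <= b <-> (forall x, Xa a x -> Xa b x)) /\
  (* ... preserving meet, join, bottom, top and the quasi-complement *)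
  (forall a b : L, Xa (a `&` b) = (fun x => Xa a x /\ Xa b x)) /\
  (forall a b : L, Xa (a `|` b) = joinG (Xa a) (Xa b)) /\
  Xa (\bot : L) = (fun _ => False) /\
  Xa (\top : L) = (fun _ => True) /\
  (forall a : L, Xa (nu a) = star nu (Xa a)).
Proof.
case: hnu => [nu_anti [nu0 _]].
have star_Xa_nu := star_Xa nu_anti nu0.
split; first exact: star_Xa_nu.
split; first exact: KOG_Xa.
split; first exact: KOG_Xa_surj.
split; first exact: Xa_inj.
split; first exact: le_Xa.
split; first exact: XaI.
split; first exact: XaU.
split; first exact: Xa0.
split; first exact: Xa1.
by move=> a; rewrite star_Xa_nu.
Qed.
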